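(* Let $R$ be an associative ring with identity. Then $R$ is NJ-symmetric in each of the following cases: (1) $R$ is left quasi-duo, or $R$ is right quasi-duo; (2) $R$ is abelian and J-clean; (3) $R$ is abelian and J-quasipolar; (4) $R$ is generalized weakly symmetric (GWS) and $x^2=0$ for every nilpotent $x\in R$ (i.e. the index of nilpotency of nilpotent elements is at most 2).
   Context: $N(R)$ denotes the set of nilpotent elements and $J(R)$ the Jacobson radical of $R$. $R$ is NJ-symmetric if for all $a,b,c\in R$, $abc\in N(R)$ implies $bac\in J(R)$. $R$ is left (right) quasi-duo if every maximal left (right) ideal of $R$ is a two-sided ideal. $R$ is abelian if every idempotent of $R$ is central. $R$ is J-clean if every $a\in R$ can be written $a=e+j$ with $e^2=e$ and $j\in J(R)$. For $a\in R$, $\mathrm{comm}(a)=\{y\in R: ya=ay\}$ and $\mathrm{comm}^2(a)=\{x\in R: xy=yx \text{ for all } y\in \mathrm{comm}(a)\}$; $R$ is J-quasipolar if for every $a\in R$ there is $f=f^2\in\mathrm{comm}^2(a)$ with $a+f\in J(R)$. $R$ is GWS if for all $a,b,c\in R$, $abc=0$ implies $bac\in N(R)$. *)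

From mathcomp Require Import all_boot all_algebra.
Set Implicit Arguments. Unset Strict Implicit. Unset Printing Implicit Defensive.
Import GRing.Theory.
Local Open Scope ring_scope.

Definition nilp (R : nzRingType) (x : R) : Prop := exists n : nat, x ^+ n = 0.

Definition left_ideal (R : nzRingType) (I : R -> Prop) : Prop :=
  [/\ I 0, (forall x y, I x -> I y -> I (x + y)) & (forall r x, I x -> I (r * x))].

Definition right_ideal (R : nzRingType) (I : R -> Prop) : Prop :=
  [/\ I 0, (forall x y, I x -> I y -> I (x + y)) & (forall r x, I x -> I (x * r))].

Definition two_sided_ideal (R : nzRingType) (I : R -> Prop) : Prop :=
  left_ideal I /\ right_ideal I.

Definition maximal_left_ideal (R : nzRingType) (M : R -> Prop) : Prop :=
  [/\ left_ideal M, ~ M 1 &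
      forall I, left_ideal I -> ~ I 1 -> (forall x, M x -> I x) -> forall x, I x -> M x].

Definition maximal_right_ideal (R : nzRingType) (M : R -> Prop) : Prop :=
  [/\ right_ideal M, ~ M 1 &
      forall I, right_ideal I -> ~ I 1 -> (forall x, M x -> I x) -> forall x, I x -> M x].

Definition jacobson (R : nzRingType) (x : R) : Prop :=
  forall M, maximal_left_ideal M -> M x.

Definition NJ_symmetric (R : nzRingType) : Prop :=
  forall a b c : R, nilp (a * b * c) -> jacobson (b * a * c).

Definition left_quasi_duo (R : nzRingType) : Prop :=
  forall M : R -> Prop, maximal_left_ideal M -> two_sided_ideal M.

Definition right_quasi_duo (R : nzRingType) : Prop :=
  forall M : R -> Prop, maximal_right_ideal M -> two_sided_ideal M.

Definition abelian_ring (R : nzRingType) : Prop :=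
  forall e : R, e * e = e -> forall x, e * x = x * e.

Definition J_clean (R : nzRingType) : Prop :=
  forall a : R, exists e j, [/\ e * e = e, jacobson j & a = e + j].

Definition in_comm2 (R : nzRingType) (a f : R) : Prop :=
  forall y, y * a = a * y -> f * y = y * f.

Definition J_quasipolar (R : nzRingType) : Prop :=
  forall a : R, exists f, [/\ f * f = f, in_comm2 a f & jacobson (a + f)].

Definition GWS (R : nzRingType) : Prop :=
  forall a b c : R, a * b * c = 0 -> nilp (b * a * c).

Definition nil_index_le2 (R : nzRingType) : Prop :=
  forall x : R, nilp x -> x ^+ 2 = 0.

From Pilot Require Import Defs.
From mathcomp Require Import all_boot all_algebra.
From mathcomp Require Import boolp classical_sets.
(* J(R) is the intersection of the maximal left ideals.  It is closed under
   right multiplication because, for r outside a maximal left ideal M, the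
   ideal {y | y r in M} is again maximal; and x lies in J as soon as every
   1 - r x has a left inverse.
   (1) A maximal one-sided ideal that is two-sided is completely prime, so it
   contains bac whenever it contains the nilpotent abc.  For right quasi-duo
   rings this puts bac in every maximal right ideal, and by Zorn's lemma the
   intersection of those is contained in J.
   (2), (3) Both hypotheses give a - a^2 in J for every a, so R/J is Boolean,
   hence commutative and reduced, and bac = abc = 0 modulo J. *)

Set Implicit Arguments. Unset Strict Implicit. Unset Printing Implicit Defensive.
Import GRing.Theory.
Local Open Scope ring_scope.

Section JacobsonRadical.
Variable R : nzRingType.
Implicit Types (M : R -> Prop) (r x y : R).

Lemma maximal_left_ideal_span1 M x : maximal_left_ideal M -> ~ M x ->
  exists m r, M m /\ m + r * x = 1.
Proof.
case=> [[M0 MD MM] _ Mmax] Mx.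
pose I z := exists m r, M m /\ m + r * x = z.
have [//|nI1] := pselect (I 1).
exfalso; apply: Mx; apply: (Mmax I) => //.
- split.
  + by exists 0, 0; rewrite mul0r addr0.
  + move=> _ _ [m1 [r1 [Mm1 <-]]] [m2 [r2 [Mm2 <-]]].
    by exists (m1 + m2), (r1 + r2); rewrite mulrDl addrACA; split; first exact: MD.
  + move=> s _ [m [r [Mm <-]]].
    by exists (s * m), (s * r); rewrite mulrDr mulrA; split; first exact: MM.
- by move=> m Mm; exists m, 0; rewrite mul0r addr0.
- by exists 0, 1; rewrite mul1r add0r.
Qed.

Lemma maximal_left_ideal_colon M r : maximal_left_ideal M -> ~ M r ->
  maximal_left_ideal (fun y => M (y * r)).
Proof.
move=> Mmax Mr; have [[M0 MD MM] _ _] := Mmax.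
split; first split.
- by rewrite mul0r.
- by move=> u v Mu Mv; rewrite mulrDl; apply: MD.
- by move=> s u Mu; rewrite -mulrA; apply: MM.
- by rewrite mul1r.
move=> I [_ ID IM] I1 MrI k Ik; apply: contrapT => Mkr.
have [m [s [Mm m_sk]]] := maximal_left_ideal_span1 Mmax Mkr.
have I1rsk : I (1 - r * s * k).
  apply: MrI; have -> : (1 - r * s * k) * r = r * m.
    by rewrite -[m](addrK (s * (k * r))) m_sk mulrBl mulrBr mul1r mulr1 !mulrA.
  exact: MM.
by apply: I1; rewrite -(subrK (r * s * k) 1); apply: ID => //; apply: IM.
Qed.

Lemma jacobson0 : jacobson (0 : R).
Proof. by move=> M [[]]. Qed.

Lemma jacobsonD x y : jacobson x -> jacobson y -> jacobson (x + y).
Proof. by move=> Jx Jy M Mmax; have [[_ MD _] _ _] := Mmax; apply: MD; [apply: Jx|apply: Jy]. Qed.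

Lemma jacobsonMl r x : jacobson x -> jacobson (r * x).
Proof. by move=> Jx M Mmax; have [[_ _ MM] _ _] := Mmax; apply: MM; apply: Jx. Qed.

Lemma jacobsonN x : jacobson x -> jacobson (- x).
Proof. by rewrite -mulN1r; apply: jacobsonMl. Qed.

Lemma jacobsonB x y : jacobson x -> jacobson y -> jacobson (x - y).
Proof. by move=> Jx /jacobsonN; apply: jacobsonD. Qed.

Lemma jacobsonMr x r : jacobson x -> jacobson (x * r).
Proof.
move=> Jx M Mmax; have [[_ _ MM] _ _] := Mmax.
have [Mr|Mr] := pselect (M r); first exact: MM.
exact: (Jx _ (maximal_left_ideal_colon Mmax Mr)).
Qed.

Lemma jacobson_left_quasiregular x :
  (forall r, exists u, u * (1 - r * x) = 1) -> jacobson x.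
Proof.
move=> lqr M Mmax; have [[_ _ MM] M1 _] := Mmax.
apply: contrapT => Mx; have [m [r [Mm m_rx]]] := maximal_left_ideal_span1 Mmax Mx.
have [u u_rx] := lqr r; apply: M1.
by rewrite -u_rx -m_rx addrK; apply: MM.
Qed.

Lemma nilp_left_inv1B y : Defs.nilp y -> exists u, u * (1 - y) = 1.
Proof.
case=> n yn0; exists (\sum_(i < n) y ^+ i).
have comm_y : GRing.comm (1 - y) (\sum_(i < n) y ^+ i).
  apply: commr_sum => i _; apply/commr_sym/commrB; first exact: commr1.
  exact/commr_sym/commrX.
by rewrite -comm_y -opprB mulNr -subrX1 yn0 sub0r opprK.
Qed.

Lemma jacobson_nilp_left_multiples x :
  (forall r, Defs.nilp (r * x)) -> jacobson x.
Proof. by move=> nil_rx; apply: jacobson_left_quasiregular => r; apply: nilp_left_inv1B. Qed.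

End JacobsonRadical.

Definition completely_prime (R : nzRingType) (M : R -> Prop) : Prop :=
  forall x y, M (x * y) -> M x \/ M y.

Lemma two_sided_maximal_left_ideal_prime (R : nzRingType) (M : R -> Prop) :
  maximal_left_ideal M -> two_sided_ideal M -> completely_prime M.
Proof.
move=> Mmax [[_ MD MM] [_ _ MMr]] x y Mxy.
have [Mx|Mx] := pselect (M x); [by left | right].
have [m [r [Mm m_rx]]] := maximal_left_ideal_span1 Mmax Mx.
by rewrite -[y]mul1r -m_rx mulrDl -mulrA; apply: MD; [apply: MMr|apply: MM].
Qed.

Lemma two_sided_maximal_right_ideal_prime (R : nzRingType) (M : R -> Prop) :
  maximal_right_ideal M -> two_sided_ideal M -> completely_prime M.
Proof.
move=> Mmax [Ml Mr] x y /(@two_sided_maximal_left_ideal_prime R^c M Mmax (conj Mr Ml)).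
by case; [right|left].
Qed.

Lemma completely_prime_nilp_swap (R : nzRingType) (M : R -> Prop) (a b c : R) :
  two_sided_ideal M -> completely_prime M -> Defs.nilp (a * b * c) -> M (b * a * c).
Proof.
move=> [[M0 _ MM] [_ _ MMr]] Mprime [n abc_n0].
have Mabc : M (a * b * c).
  have : M ((a * b * c) ^+ n) by rewrite abc_n0.
  elim: n {abc_n0} => [|n IHn]; first by rewrite expr0 => /(MMr (a * b * c)); rewrite mul1r.
  by rewrite exprS => /Mprime [|/IHn].
have [/Mprime[Ma|Mb]|Mc] := Mprime _ _ Mabc.
- exact/MMr/MM.
- exact/MMr/MMr.
- exact: MM.
Qed.

Section RightIdeals.
Variable R : nzRingType.
Local Open Scope classical_set_scope.

Lemma bigcup_chain_proper_right_ideal (F : set (set R)) :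
  F !=set0 -> total_on F subset -> (forall X, F X -> right_ideal X /\ ~ X 1) ->
  right_ideal (\bigcup_(X in F) X) /\ ~ (\bigcup_(X in F) X) 1.
Proof.
move=> [X0 FX0] Ftot Fproper; split; last by case=> X /Fproper[].
split.
- by exists X0 => //; have [[]] := Fproper _ FX0.
- move=> u v [X FX Xu] [Y FY Yv].
  wlog XY : X Y u v FX FY Xu Yv / X `<=` Y.
    move=> wlog_XY; have [XY|YX] := Ftot _ _ FX FY; first exact: (wlog_XY X Y).
    by rewrite addrC; apply: (wlog_XY Y X).
  have [[_ YD _] _] := Fproper _ FY.
  by exists Y => //; apply: YD => //; apply: XY.
- move=> r u [X FX Xu]; have [[_ _ XM] _] := Fproper _ FX.
  by exists X => //; apply: XM.
Qed.

Lemma exists_maximal_right_ideal (I : set R) : right_ideal I -> ~ I 1 ->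
  exists2 M, maximal_right_ideal M & I `<=` M.
Proof.
move=> Iideal I1.
pose Q (X : set R) := [/\ right_ideal X, ~ X 1 & I `<=` X].
pose le (A B : {X | Q X}) := `[< sval A `<=` sval B >].
have [||C Ctot|[M [Mideal M1 IM]] Mmax] :=
  @ZL_preorder _ (exist _ I (And3 Iideal I1 (@subset_refl _ I))) le.
- by move=> A; apply/asboolP.
- by move=> A B C /asboolP AB /asboolP BC; apply/asboolP; apply: subset_trans BC.
- pose F := I |` [set sval A | A in C].
  have FI : F I by left.
  have [Fideal F1] : right_ideal (\bigcup_(X in F) X) /\ ~ (\bigcup_(X in F) X) 1.
    apply: bigcup_chain_proper_right_ideal; first by exists I.
    + move=> _ _ [->|[A CA <-]] [->|[B CB <-]]; first by left.
      * by left; case: (svalP B).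
      * by right; case: (svalP A).
      * by case: (Ctot _ _ CA CB) => /asboolP; [left|right].
    + by move=> _ [->|[A _ <-]]; last case: (svalP A).
  have QF : Q (\bigcup_(X in F) X) by split => // x Ix; exists I.
  by exists (exist _ _ QF) => A CA; apply/asboolP => x Ax; exists (sval A) => //; right; exists A.
exists M => //; split => // J Jideal J1 MJ.
have QJ : Q J by split => //; apply: subset_trans MJ.
by have /asboolP := Mmax (exist _ J QJ) (asboolT MJ).
Qed.

End RightIdeals.

Section JacobsonRight.
Variable R : nzRingType.
Implicit Types (r s v x : R).

Lemma left_inv1B_swap x r v :
  v * (1 - x * r) = 1 -> (1 + r * v * x) * (1 - r * x) = 1.
Proof.
move=> v_xr; rewrite mulrDl mul1r.
have -> : r * v * x * (1 - r * x) = r * (v * (1 - x * r)) * x.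
  by rewrite !mulrBr !mulrBl !mulr1 !mulrA.
by rewrite v_xr mulr1 subrK.
Qed.

Lemma jacobson_right_quasiregular x :
  (forall s, exists v, (1 - x * s) * v = 1) -> jacobson x.
Proof.
move=> rqr; apply: jacobson_left_quasiregular => r.
have [v xr_v] := rqr r.
(* v is itself of the form 1 - x s', so it has a right inverse w as well as
   the left inverse 1 - x r; hence w = 1 - x r. *)
have v_eq : v = 1 - x * - (r * v).
  by rewrite mulrN opprK mulrA -xr_v mulrBl mul1r subrK.
have [w vw] := rqr (- (r * v)); rewrite -v_eq in vw.
have w_eq : 1 - x * r = w.
  by move: (congr1 (GRing.mul (1 - x * r)) vw); rewrite mulrA xr_v mul1r mulr1.
by exists (1 + r * v * x); apply: left_inv1B_swap; rewrite w_eq.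
Qed.

Lemma jacobson_of_maximal_right x :
  (forall M, maximal_right_ideal M -> M x) -> jacobson x.
Proof.
move=> Mx; apply: jacobson_right_quasiregular => s; apply: contrapT => no_rinv.
pose I y := exists t, (1 - x * s) * t = y.
have Iideal : right_ideal I.
  split; first by exists 0; rewrite mulr0.
  - by move=> _ _ [t1 <-] [t2 <-]; exists (t1 + t2); rewrite mulrDr.
  - by move=> r _ [t <-]; exists (t * r); rewrite mulrA.
have [M Mmax IM] := exists_maximal_right_ideal Iideal no_rinv.
have [[_ MD MM] M1 _] := Mmax; apply: M1.
rewrite -(subrK (x * s) 1); apply: MD; first by apply: IM; exists 1; rewrite mulr1.
exact: MM (Mx _ Mmax).
Qed.

End JacobsonRight.

Lemma left_quasi_duo_NJ_symmetric (R : nzRingType) :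
  left_quasi_duo R -> NJ_symmetric R.
Proof.
move=> lqd a b c abc_nil M Mmax; have Mideal := lqd M Mmax.
exact: completely_prime_nilp_swap Mideal (two_sided_maximal_left_ideal_prime Mmax Mideal) abc_nil.
Qed.

Lemma right_quasi_duo_NJ_symmetric (R : nzRingType) :
  right_quasi_duo R -> NJ_symmetric R.
Proof.
move=> rqd a b c abc_nil; apply: jacobson_of_maximal_right => M Mmax.
have Mideal := rqd M Mmax.
exact: completely_prime_nilp_swap Mideal (two_sided_maximal_right_ideal_prime Mmax Mideal) abc_nil.
Qed.

Section BooleanModuloJacobson.
Variable R : nzRingType.
Hypothesis idempotent_modJ : forall a : R, jacobson (a - a * a).

Lemma jacobson_nilp (x : R) : Defs.nilp x -> jacobson x.
Proof.
case=> n xn0.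
have x_subX k : jacobson (x - x ^+ k.+1).
  elim: k => [|k IHk]; first by rewrite expr1 subrr; apply: jacobson0.
  have -> : x - x ^+ k.+2 = (x - x ^+ k.+1) + x ^+ k * (x - x * x).
    by rewrite mulrBr mulrA -!exprSr addrA subrK.
  by apply: jacobsonD => //; apply: jacobsonMl.
case: n xn0 => [|n xn0]; first by move/eqP; rewrite expr0 oner_eq0.
by move: (x_subX n); rewrite xn0 subr0.
Qed.

Lemma jacobson_commutator (u v : R) : jacobson (u * v - v * u).
Proof.
have jacobson_double (a : R) : jacobson (a + a).
  by move: (jacobsonB (idempotent_modJ a) (idempotent_modJ (- a))); rewrite mulrNN opprB opprK subrKA.
have jacobson_anticomm : jacobson (u * v + v * u).
  have <- : (u - u * u) + (v - v * v) - ((u + v) - (u + v) * (u + v)) = u * v + v * u.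
    rewrite mulrDl !mulrDr opprB [u - u * u + _]addrACA -opprD (addrC (u + v - _)) addrA subrK.
    by rewrite [u * u + u * v]addrC addrACA addrK.
  by apply: jacobsonB; [apply: jacobsonD|]; apply: idempotent_modJ.
by move: (jacobsonB jacobson_anticomm (jacobson_double (v * u))); rewrite addrKA.
Qed.

Lemma idempotent_mod_jacobson_NJ_symmetric : NJ_symmetric R.
Proof.
move=> a b c abc_nil.
have := jacobsonD (jacobsonMr c (jacobson_commutator b a)) (jacobson_nilp abc_nil).
by rewrite mulrBl subrK.
Qed.

End BooleanModuloJacobson.

Lemma J_clean_idempotent_mod_jacobson (R : nzRingType) :
  J_clean R -> forall a : R, jacobson (a - a * a).
Proof.
move=> Jclean a; have [e [j [ee Jj ->]]] := Jclean a.
have -> : e + j - (e + j) * (e + j) = j - (e * j + j * (e + j)).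
  by rewrite mulrDl mulrDr ee [e + j]addrC -[e + e * j + _]addrA addrKA.
by apply: jacobsonB => //; apply: jacobsonD; [apply: jacobsonMl|apply: jacobsonMr].
Qed.

Lemma J_quasipolar_idempotent_mod_jacobson (R : nzRingType) :
  J_quasipolar R -> forall a : R, jacobson (a - a * a).
Proof.
move=> Jqp a.
have jacobson_addsq (b : R) : jacobson (b + b * b).
  have [f [ff _ Jbf]] := Jqp b.
  have -> : b + b * b = (b + f) + b * (b + f) - (b + f) * f.
    by rewrite mulrDr mulrDl ff addrACA (addrC f) addrK.
  by apply: jacobsonB; [apply: jacobsonD => //; apply: jacobsonMl|apply: jacobsonMr].
by move: (jacobsonN (jacobson_addsq (- a))); rewrite mulrNN opprD opprK.
Qed.

Section NilpotentProducts.
Variable R : nzRingType.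
Implicit Types (r x y : R).

Lemma nilp_sqr x : Defs.nilp (x * x) -> Defs.nilp x.
Proof. by case=> n xxn0; exists (2 * n)%N; rewrite exprM expr2. Qed.

Lemma nilp_mulC x y : Defs.nilp (x * y) -> Defs.nilp (y * x).
Proof.
case=> n xyn0; exists n.+1.
have -> : (y * x) ^+ n.+1 = y * (x * y) ^+ n * x.
  elim: n {xyn0} => [|n IHn]; first by rewrite expr1 expr0 mulr1.
  by rewrite exprSr IHn [(x * y) ^+ n.+1]exprSr !mulrA.
by rewrite xyn0 mulr0 mul0r.
Qed.

Hypothesis gws : GWS R.
Hypothesis nil_index2 : nil_index_le2 R.

Lemma nilp_mull r x : Defs.nilp x -> Defs.nilp (r * x).
Proof.
move=> /nil_index2; rewrite expr2 => xx0; apply: nilp_sqr.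
have := @gws r (r * x) x; rewrite -!mulrA xx0 !mulr0 !mulrA; exact.
Qed.

Lemma nilp_mulr r x : Defs.nilp x -> Defs.nilp (x * r).
Proof. by move=> /(nilp_mull r)/nilp_mulC. Qed.

Lemma nilp_mul_insert x r y : Defs.nilp (x * y) -> Defs.nilp (x * r * y).
Proof.
move=> /nilp_mulC/(nilp_mull (x * r))/(nilp_mulr (r * y)) nil_sq.
by apply: nilp_sqr; move: nil_sq; rewrite !mulrA.
Qed.

Lemma GWS_nil_index2_NJ_symmetric : NJ_symmetric R.
Proof.
move=> a b c abc_nil.
have acbc_nil : Defs.nilp (a * c * b * c).
  by rewrite -mulrA; apply: nilp_mul_insert; rewrite mulrA.
have acbac_nil : Defs.nilp (a * c * b * a * c) by apply: nilp_mul_insert.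
have bac_nil : Defs.nilp (b * a * c).
  by apply: nilp_sqr; move: (nilp_mull b acbac_nil); rewrite !mulrA.
by apply: jacobson_nilp_left_multiples => r; apply: nilp_mull.
Qed.

End NilpotentProducts.

Theorem theorem2p4 (R : nzRingType) :
  (left_quasi_duo R \/ right_quasi_duo R) \/
  (abelian_ring R /\ J_clean R) \/
  (abelian_ring R /\ J_quasipolar R) \/
  (GWS R /\ nil_index_le2 R) ->
  NJ_symmetric R.
Proof.
case=> [[lqd|rqd]|[[_ Jclean]|[[_ Jqp]|[gws nil_index2]]]].
- exact: left_quasi_duo_NJ_symmetric lqd.
- exact: right_quasi_duo_NJ_symmetric rqd.
- exact: idempotent_mod_jacobson_NJ_symmetric (J_clean_idempotent_mod_jacobson Jclean).
- exact: idempotent_mod_jacobson_NJ_symmetric (J_quasipolar_idempotent_mod_jacobson Jqp).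
- exact: GWS_nil_index2_NJ_symmetric gws nil_index2.
Qed.
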